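(* Let $W_1\subseteq C_1^\omega$ and $W_2\subseteq C_2^\omega$ be prefix-independent objectives over disjoint sets of colours $C_1,C_2$, let $\kappa$ be a cardinal, and let $(U_1,\le_1)$ and $(U_2,\le_2)$ be well-monotone graphs which are respectively $(\kappa,W_1)$-universal and $(\kappa,W_2)$-universal for prefix-independent objectives. Then the lexicographical product $U_1\ltimes U_2$ is monotone and $(\kappa,W_1\ltimes W_2)$-universal for prefix-independent objectives.
   Context: A $D$-pregraph: vertex set $V(G)$, edges $E(G)\subseteq V(G)\times D\times V(G)$ written $v\xrightarrow{c}v'$; a $D$-graph if every vertex has an outgoing edge; a $D$-pretree is a $D$-pregraph with root $t_0$ such that each vertex has a unique path from $t_0$. A morphism maps vertices so edges go to edges of the same colour. A (pre)graph satisfies an objective $W$ if every infinite path from every vertex has colour sequence in $W$. $W$ is prefix-independent if $uw\in W\iff w\in W$. A $D$-graph $U$ is $(\kappa,W)$-universal for prefix-independent objectives if $U$ satisfies $W$ and every $D$-pretree of cardinality $<\kappa$ satisfying $W$ admits a morphism into $U$. A partially ordered graph is monotone if $u\ge v\xrightarrow{c}v'\ge u'$ implies $u\xrightarrow{c}u'$, well-monotone if moreover the order is well-founded. Let $C=C_1\sqcup C_2$. For $w\in C^\omega$ let $w^1,w^2$ be the subsequences of letters from $C_1$, resp. $C_2$. $W_1\ltimes W_2=\{w\in C^\omega: (w^2\text{ infinite and }w^2\in W_2)\text{ or }(w^2\text{ finite and }w^1\in W_1)\}$. For a $C_1$-graph $(U_1,\le_1)$ and a $C_2$-graph $(U_2,\le_2)$,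 $U=U_1\ltimes U_2$ is the $C$-graph on $V(U_1)\times V(U_2)$ ordered by $(u_1,u_2)\le(u_1',u_2')\iff u_2<_2u_2'$ or ($u_2=u_2'$ and $u_1\le_1u_1'$), with edges $(u_1,u_2)\xrightarrow{c_1}(u_1',u_2')$ for $c_1\in C_1$ whenever $u_2>_2u_2'$ or ($u_2=u_2'$ and $u_1\xrightarrow{c_1}u_1'\in E(U_1)$), and $(u_1,u_2)\xrightarrow{c_2}(u_1',u_2')$ for $c_2\in C_2$ whenever $u_2\xrightarrow{c_2}u_2'\in E(U_2)$. *)

From Stdlib Require Import List Arith.
Import ListNotations.
Set Implicit Arguments.

Definition word (D : Type) := nat -> D.

Definition objective (D : Type) := word D -> Prop.

Fixpoint prepend (D : Type) (u : list D) (w : word D) : word D :=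
  match u with
  | [] => w
  | c :: u' => fun n => match n with 0 => c | S k => prepend u' w k end
  end.

Definition prefix_independent (D : Type) (W : objective D) : Prop :=
  forall (u : list D) (w : word D), W (prepend u w) <-> W w.

(** A D-pregraph is given by a vertex type [V] and an edge relation
    [E u c v] meaning u --c--> v. *)
Definition edges (V D : Type) := V -> D -> V -> Prop.

Definition is_graph (V D : Type) (E : edges V D) : Prop :=
  forall v, exists c v', E v c v'.

Fixpoint is_path (V D : Type) (E : edges V D) (u : V) (p : list (D * V)) (v : V)
  : Prop :=
  match p with
  | [] => u = v
  | (c, x) :: p' => E u c x /\ is_path E x p' v
  end.

Definition is_pretree (V D : Type) (E : edges V D) (t0 : V) : Prop :=
  forall v, exists p, is_path E t0 p v /\
    forall q, is_path E t0 q v -> q = p.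

Definition satisfies (V D : Type) (E : edges V D) (W : objective D) : Prop :=
  forall (vs : nat -> V) (cs : word D),
    (forall n, E (vs n) (cs n) (vs (S n))) -> W cs.

Definition is_morphism (V V' D : Type) (E : edges V D) (E' : edges V' D)
  (phi : V -> V') : Prop :=
  forall u c v, E u c v -> E' (phi u) c (phi v).

(** Cardinals: the cardinal kappa is represented by a type [K] of
    cardinality kappa; |T| < kappa means T injects into K but K does
    not inject into T. *)
Definition injective (A B : Type) (f : A -> B) : Prop :=
  forall x y, f x = f y -> x = y.

Definition card_lt (T K : Type) : Prop :=
  (exists f : T -> K, injective f) /\ ~ (exists g : K -> T, injective g).

Definition universal (K D U : Type) (EU : edges U D) (W : objective D) : Prop :=
  is_graph EU /\ satisfies EU W /\
  forall (T : Type) (ET : edges T D) (t0 : T),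
    is_pretree ET t0 -> card_lt T K -> satisfies ET W ->
    exists phi : T -> U, is_morphism ET EU phi.

Definition is_partial_order (V : Type) (le : V -> V -> Prop) : Prop :=
  (forall x, le x x) /\
  (forall x y, le x y -> le y x -> x = y) /\
  (forall x y z, le x y -> le y z -> le x z).

Definition strict (V : Type) (le : V -> V -> Prop) (x y : V) : Prop :=
  le x y /\ x <> y.

Definition monotone (V D : Type) (E : edges V D) (le : V -> V -> Prop) : Prop :=
  forall u v c v' u', le v u -> E v c v' -> le u' v' -> E u c u'.

Definition well_monotone (V D : Type) (E : edges V D) (le : V -> V -> Prop)
  : Prop :=
  is_partial_order le /\ monotone E le /\ well_founded (strict le).

(** Subsequence of the letters selected by [p]: [v] is the sequence of
    [p]-images of the letters of [w] for which [p] is defined, enumerated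
    in order by the strictly increasing [f]. *)
Definition filtered (C A : Type) (p : C -> option A) (w : word C) (v : word A)
  : Prop :=
  exists f : nat -> nat,
    (forall n, f n < f (S n)) /\
    (forall n, p (w (f n)) = Some (v n)) /\
    (forall k, p (w k) <> None -> exists n, f n = k).

Definition proj1c (C1 C2 : Type) (c : C1 + C2) : option C1 :=
  match c with inl a => Some a | inr _ => None end.
Definition proj2c (C1 C2 : Type) (c : C1 + C2) : option C2 :=
  match c with inl _ => None | inr b => Some b end.

Definition is2 (C1 C2 : Type) (c : C1 + C2) : Prop :=
  match c with inl _ => False | inr _ => True end.

Definition infinite2 (C1 C2 : Type) (w : word (C1 + C2)) : Prop :=
  forall N, exists k, N <= k /\ is2 (w k).
Definition finite2 (C1 C2 : Type) (w : word (C1 + C2)) : Prop :=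
  exists N, forall k, N <= k -> ~ is2 (w k).

Definition lex_obj (C1 C2 : Type) (W1 : objective C1) (W2 : objective C2)
  : objective (C1 + C2) :=
  fun w =>
    (infinite2 w /\ exists v, filtered (@proj2c C1 C2) w v /\ W2 v) \/
    (finite2 w /\ exists v, filtered (@proj1c C1 C2) w v /\ W1 v).

Definition lex_le (V1 V2 : Type) (le1 : V1 -> V1 -> Prop) (le2 : V2 -> V2 -> Prop)
  (x y : V1 * V2) : Prop :=
  strict le2 (snd x) (snd y) \/ (snd x = snd y /\ le1 (fst x) (fst y)).

Definition lex_edges (V1 V2 C1 C2 : Type) (E1 : edges V1 C1) (E2 : edges V2 C2)
  (le2 : V2 -> V2 -> Prop) : edges (V1 * V2) (C1 + C2) :=
  fun x c y =>
    match c with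
    | inl c1 => strict le2 (snd y) (snd x) \/
                (snd x = snd y /\ E1 (fst x) c1 (fst y))
    | inr c2 => E2 (snd x) c2 (snd y)
    end.

(* Along an infinite path of U1 ⋉ U2 every C1-letter weakly decreases the U2-coordinate.
   If there are infinitely many C2-letters, monotonicity of U2 turns the U2-coordinates read at
   the C2-letters into an infinite path of U2, whose colours are the C2-subsequence; so it lies
   in W2.  Otherwise, after the last C2-letter the U2-coordinate is a descending chain in a
   well-founded order, hence eventually constant; from then on the path follows U1-edges, and
   prefix-independence of W1 concludes.

   For universality, cut a pretree T over C1 ⊔ C2 into its C1-components, each rooted at t0 or
   at the target of a C2-edge.  Each component is a C1-pretree satisfying W1, and contracting
   the components gives a C2-pretree satisfying W2.  Embedding the contracted tree into U2 and
   every component into U1 yields a morphism T -> U1 ⋉ U2: C1-edges stay inside a component,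
   where the U2-coordinate is constant, and C2-edges are edges of the contracted tree. *)

From Stdlib Require Import List Arith Lia Relations ConstructiveEpsilon
  Classical ClassicalEpsilon FunctionalExtensionality ProofIrrelevance.
Import ListNotations.
Set Implicit Arguments.
Unset Strict Implicit.

Definition increasing (f : nat -> nat) : Prop := forall n, f n < f (S n).

Section Increasing.

Variable f : nat -> nat.
Hypothesis f_incr : increasing f.

Lemma increasing_le n m : n <= m -> f n <= f m.
Proof. induction 1; [lia | specialize (f_incr m); lia]. Qed.

Lemma increasing_lt_iff n m : f n < f m <-> n < m.
Proof.
  split; intro h.
  - destruct (le_lt_dec m n) as [l | l]; [pose proof (increasing_le l); lia | exact l].
  - pose proof (increasing_le h); specialize (f_incr n); lia.
Qed.

Lemma increasing_ge_id n : n <= f n.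
Proof. induction n; [lia | specialize (f_incr n); lia]. Qed.

End Increasing.

Lemma increasing_same_range_eq (f g : nat -> nat) :
  increasing f -> increasing g ->
  (forall n, exists m, g m = f n) -> (forall n, exists m, f m = g n) -> f = g.
Proof.
  intros f_incr g_incr fg gf. extensionality n.
  induction n as [n IH] using lt_wf_ind.
  destruct (fg n) as [m gm_fn], (gf n) as [m' fm'_gn].
  assert (n_le_m : n <= m).
  { destruct (le_lt_dec n m) as [l | l]; [exact l |].
    rewrite <- (IH m l) in gm_fn. apply (increasing_lt_iff f_incr) in l. lia. }
  assert (n_le_m' : n <= m').
  { destruct (le_lt_dec n m') as [l | l]; [exact l |].
    rewrite (IH m' l) in fm'_gn. apply (increasing_lt_iff g_incr) in l. lia. }
  pose proof (increasing_le f_incr n_le_m'); pose proof (increasing_le g_incr n_le_m); lia.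
Qed.

Lemma increasing_enumeration (P : nat -> Prop) :
  (forall N, exists k, N <= k /\ P k) ->
  exists f, increasing f /\ (forall n, P (f n)) /\ (forall k, P k -> exists n, f n = k).
Proof.
  intros P_inf.
  pose (next N := proj1_sig (epsilon_smallest (fun k => N <= k /\ P k)
                                (fun k => excluded_middle_informative _) (P_inf N))).
  assert (next_spec : forall N, (N <= next N /\ P (next N)) /\
                                forall k, N <= k /\ P k -> next N <= k)
    by (intro N; exact (proj2_sig (epsilon_smallest _ _ (P_inf N)))).
  pose (f := fix f n := match n with 0 => next 0 | S m => next (S (f m)) end).
  assert (f_incr : increasing f) by (intro n; apply next_spec).
  exists f. split; [exact f_incr | split].
  - intros []; apply next_spec.
  - intros k Pk.
    enough (H : forall n, k <= f n -> exists m, f m = k)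
      by exact (H k (increasing_ge_id f_incr k)).
    induction n as [| n IH]; intro k_le.
    + exists 0. pose proof (proj2 (next_spec 0) k (conj (Nat.le_0_l k) Pk)). simpl in *. lia.
    + destruct (le_lt_dec k (f n)) as [l | l]; [exact (IH l) |].
      exists (S n). pose proof (proj2 (next_spec (S (f n))) k (conj l Pk)). simpl in *. lia.
Qed.

Section Filtered.

Variables (C A : Type) (p : C -> option A).

Lemma filtered_exists (w : word C) :
  (forall N, exists k, N <= k /\ p (w k) <> None) -> exists v, filtered p w v.
Proof.
  intro inf.
  destruct (increasing_enumeration inf) as [f [f_incr [f_def f_onto]]].
  destruct (p (w (f 0))) as [a0 |] eqn:E0; [| now destruct (f_def 0)].
  exists (fun n => match p (w (f n)) with Some a => a | None => a0 end), f.
  split; [exact f_incr | split; [| exact f_onto]].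
  intro n. specialize (f_def n). now destruct (p (w (f n))).
Qed.

Lemma filtered_unique (w : word C) v v' : filtered p w v -> filtered p w v' -> v = v'.
Proof.
  intros [f [f_incr [f_def f_onto]]] [g [g_incr [g_def g_onto]]].
  assert (f_eq_g : f = g).
  { apply increasing_same_range_eq; [exact f_incr | exact g_incr | |]; intro n.
    - apply g_onto. rewrite f_def. discriminate.
    - apply f_onto. rewrite g_def. discriminate. }
  subst g. extensionality n. specialize (f_def n). specialize (g_def n). congruence.
Qed.

Lemma filtered_infinite (w : word C) v :
  filtered p w v -> forall N, exists k, N <= k /\ p (w k) <> None.
Proof.
  intros [f [f_incr [f_def _]]] N. exists (f N).
  split; [exact (increasing_ge_id f_incr N) | rewrite f_def; discriminate].
Qed.

Lemma filtered_suffix (w : word C) v N :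
  filtered p w v -> (forall k, N <= k -> p (w k) <> None) ->
  exists j, forall n, p (w (N + n)) = Some (v (j + n)).
Proof.
  intros [f [f_incr [f_def f_onto]]] tail.
  destruct (f_onto N (tail N (le_n N))) as [j fj].
  assert (shift : forall n, f (j + n) = N + n).
  { induction n as [| n IH]; [rewrite !Nat.add_0_r; exact fj |].
    destruct (f_onto (N + S n)) as [m fm]; [apply tail; lia |].
    assert (j + n < m) by (apply (increasing_lt_iff f_incr); lia).
    pose proof (increasing_le f_incr (n := S (j + n)) (m := m) ltac:(lia)).
    specialize (f_incr (j + n)). rewrite Nat.add_succ_r. lia. }
  exists j. intro n. rewrite <- shift. apply f_def.
Qed.

End Filtered.

Lemma prepend_seq (D : Type) (w : word D) j : forall s,
  prepend (map w (seq s j)) (fun n => w (s + j + n)) = fun n => w (s + n).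
Proof.
  induction j as [| j IH]; intro s; extensionality n; simpl.
  - now rewrite Nat.add_0_r.
  - destruct n as [| n]; [now rewrite Nat.add_0_r |].
    replace (s + S j) with (S s + j) by lia. rewrite IH. f_equal. lia.
Qed.

Lemma prefix_independent_suffix (D : Type) (W : objective D) (w : word D) j :
  prefix_independent W -> W (fun n => w (j + n)) -> W w.
Proof.
  intros pi Wsuffix. change (fun n => w (j + n)) with (fun n => w (0 + j + n)) in Wsuffix.
  rewrite <- (pi (map w (seq 0 j))), (prepend_seq w j 0) in Wsuffix. exact Wsuffix.
Qed.

Section Paths.

Variables (V D : Type) (E : edges V D).

Lemma is_path_app p q u w :
  is_path E u (p ++ q) w <-> exists v, is_path E u p v /\ is_path E v q w.
Proof.
  revert u; induction p as [| [c x] p IH]; intro u; simpl.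
  - split; [eauto | now intros [v [-> h]]].
  - rewrite IH. firstorder.
Qed.

Lemma is_path_snoc p u c x :
  (exists v, is_path E u p v /\ E v c x) -> is_path E u (p ++ [(c, x)]) x.
Proof. intros [v [pv e]]. apply is_path_app. exists v. simpl. auto. Qed.

Lemma is_path_target_unique p u v v' : is_path E u p v -> is_path E u p v' -> v = v'.
Proof.
  revert u; induction p as [| [c x] p IH]; intro u; simpl; [congruence |].
  intros [_ h] [_ h']. eauto.
Qed.

Fixpoint path_vertex (u : V) (p : list (D * V)) (j : nat) {struct j} : V :=
  match j with
  | 0 => u
  | S j' => match p with (_, x) :: p' => path_vertex x p' j' | [] => u end
  end.

Lemma is_path_nth p u v d j :
  is_path E u p v -> j < length p ->
  E (path_vertex u p j) (fst (nth j p d)) (path_vertex u p (S j)).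
Proof.
  revert u j; induction p as [| [c x] p IH]; intros u j path_p j_lt; simpl in *; [lia |].
  destruct path_p as [e path_p], j as [| j]; [exact e |].
  apply IH; [exact path_p | lia].
Qed.

Lemma path_vertex_length p u v : is_path E u p v -> path_vertex u p (length p) = v.
Proof.
  revert u; induction p as [| [c x] p IH]; intros u path_p; simpl in *; [exact path_p |].
  apply IH, path_p.
Qed.

Variable r : V.

Lemma pretree_no_edge_to_root x c : is_pretree E r -> ~ E x c r.
Proof.
  intros tree e. destruct (tree x) as [p [path_p _]], (tree r) as [q [_ q_unique]].
  assert (loop : is_path E r (p ++ [(c, r)]) r) by (apply is_path_snoc; eauto).
  pose proof (q_unique _ loop). pose proof (q_unique [] eq_refl). subst q.
  destruct p; discriminate.
Qed.

Lemma pretree_parent_unique a c a' c' b :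
  is_pretree E r -> E a c b -> E a' c' b -> a = a' /\ c = c'.
Proof.
  intros tree e e'.
  destruct (tree a) as [p [path_p _]], (tree a') as [p' [path_p' _]].
  destruct (tree b) as [q [_ q_unique]].
  assert (to_b : is_path E r (p ++ [(c, b)]) b) by (apply is_path_snoc; eauto).
  assert (to_b' : is_path E r (p' ++ [(c', b)]) b) by (apply is_path_snoc; eauto).
  assert (same : p ++ [(c, b)] = p' ++ [(c', b)])
    by (rewrite (q_unique _ to_b), (q_unique _ to_b'); reflexivity).
  apply app_inj_tail in same as [-> same]. injection same as ->.
  split; [eapply is_path_target_unique; eauto | reflexivity].
Qed.

Lemma pretree_intro :
  (forall v, exists p, is_path E r p v) -> (forall x c, ~ E x c r) ->
  (forall a c a' c' b, E a c b -> E a' c' b -> a = a' /\ c = c') -> is_pretree E r.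
Proof.
  intros reach no_in parent v. destruct (reach v) as [p path_p]. exists p.
  split; [exact path_p |]. clear reach.
  revert v path_p. induction p as [| [c x] p IH] using rev_ind; intros v path_p q path_q.
  - simpl in path_p; subst v. destruct q as [| [c' x'] q _] using rev_ind; [reflexivity |].
    apply is_path_app in path_q as [y [_ [e ->]]]. exfalso; eapply no_in; eauto.
  - apply is_path_app in path_p as [y [path_p [e ->]]].
    destruct q as [| [c' x'] q _] using rev_ind.
    + simpl in path_q; subst. exfalso; eapply no_in; eauto.
    + apply is_path_app in path_q as [y' [path_q [e' ->]]].
      destruct (parent _ _ _ _ _ e e') as [<- <-]. now rewrite (IH y path_p q path_q).
Qed.

End Paths.

Section Flatten.

Variables (A : Type) (b : nat -> list A).
Hypothesis b_nonempty : forall n, 0 < length (b n).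

Fixpoint block_start (n : nat) : nat :=
  match n with 0 => 0 | S m => block_start m + length (b m) end.

Fixpoint block_pos (k : nat) : nat * nat :=
  match k with
  | 0 => (0, 0)
  | S k' => let (n, j) := block_pos k' in
            if S j <? length (b n) then (n, S j) else (S n, 0)
  end.

Lemma block_pos_spec k :
  snd (block_pos k) < length (b (fst (block_pos k))) /\
  k = block_start (fst (block_pos k)) + snd (block_pos k).
Proof.
  induction k as [| k IH]; simpl; [split; [apply b_nonempty | reflexivity] |].
  destruct (block_pos k) as [n j]; simpl in IH.
  destruct (Nat.ltb_spec (S j) (length (b n))); simpl; [lia |].
  pose proof (b_nonempty (S n)). lia.
Qed.

Lemma block_start_le n m : n <= m -> block_start n <= block_start m.
Proof. induction 1; simpl; lia. Qed.

Lemma block_pos_start n j : j < length (b n) -> block_pos (block_start n + j) = (n, j).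
Proof.
  intro j_lt. destruct (block_pos_spec (block_start n + j)) as [j'_lt k_eq].
  destruct (block_pos (block_start n + j)) as [n' j'] eqn:pos; simpl in *.
  assert (n = n') as <-.
  { destruct (lt_eq_lt_dec n n') as [[l | l] | l]; [| exact l |];
      apply block_start_le in l; simpl in l; lia. }
  f_equal. lia.
Qed.

Definition flatten (d : A) (k : nat) : A := let (n, j) := block_pos k in nth j (b n) d.

Lemma flatten_block d n j : j < length (b n) -> flatten d (block_start n + j) = nth j (b n) d.
Proof. intro j_lt. unfold flatten. now rewrite block_pos_start. Qed.

Lemma filtered_flatten (B : Type) (p : A -> option B) (v : word B) d :
  (forall n j, S j < length (b n) -> p (nth j (b n) d) = None) ->
  (forall n, p (nth (pred (length (b n))) (b n) d) = Some (v n)) ->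
  filtered p (flatten d) v.
Proof.
  intros inner last. exists (fun n => block_start n + pred (length (b n))).
  split; [| split].
  - intro n. pose proof (b_nonempty n). simpl. lia.
  - intro n. rewrite flatten_block; [apply last | pose proof (b_nonempty n); lia].
  - intros k defined. destruct (block_pos_spec k) as [j_lt k_eq].
    destruct (block_pos k) as [n j]; simpl in *; subst k.
    exists n. f_equal. destruct (Nat.eq_dec (S j) (length (b n))); [lia |].
    exfalso. apply defined. rewrite flatten_block by exact j_lt. apply inner. lia.
Qed.

End Flatten.

Lemma infinite_path_of_paths (V D : Type) (E : edges V D) (x : nat -> V)
  (b : nat -> list (D * V)) d :
  (forall n, 0 < length (b n)) -> (forall n, is_path E (x n) (b n) (x (S n))) ->
  exists vs, forall k, E (vs k) (fst (flatten b d k)) (vs (S k)).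
Proof.
  intros b_nonempty paths.
  exists (fun k => let (n, j) := block_pos b k in path_vertex (x n) (b n) j). intro k.
  unfold flatten. destruct (block_pos_spec b_nonempty k) as [j_lt _]. simpl.
  destruct (block_pos b k) as [n j]; simpl in j_lt.
  pose proof (is_path_nth d (paths n) j_lt) as step.
  destruct (Nat.ltb_spec (S j) (length (b n))); [exact step |].
  replace (S j) with (length (b n)) in step by lia.
  rewrite (path_vertex_length (paths n)) in step. exact step.
Qed.

Lemma proj1_sig_inj (X : Type) (P : X -> Prop) : injective (@proj1_sig X P).
Proof. exact (eq_sig_hprop (fun x => proof_irrelevance (P x))). Qed.

Lemma card_lt_sig (X K : Type) (P : X -> Prop) : card_lt X K -> card_lt (sig P) K.
Proof.
  pose proof (@proj1_sig_inj X P) as val_inj.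
  intros [[f f_inj] no_inj]. split.
  - exists (fun x => f (proj1_sig x)). intros x y e. apply val_inj, f_inj, e.
  - intros [g g_inj]. apply no_inj. exists (fun k => proj1_sig (g k)).
    intros x y e. apply g_inj, val_inj, e.
Qed.

Lemma proj2c_is2 (C1 C2 : Type) (c : C1 + C2) : proj2c c <> None <-> is2 c.
Proof. destruct c; simpl; intuition discriminate. Qed.

Lemma proj1c_not_is2 (C1 C2 : Type) (c : C1 + C2) : proj1c c <> None <-> ~ is2 c.
Proof. destruct c; simpl; intuition discriminate. Qed.

Lemma lex_obj_inl (C1 C2 : Type) (W1 : objective C1) (W2 : objective C2) (w : word C1) :
  lex_obj W1 W2 (fun n => inl (w n)) -> W1 w.
Proof.
  assert (fw : filtered (@proj1c C1 C2) (fun n => inl (w n)) w)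
    by (exists (fun n => n); repeat split; eauto).
  intros [[inf _] | [_ [v [fv W1v]]]].
  - destruct (inf 0) as [k [_ []]].
  - now rewrite (filtered_unique fw fv).
Qed.

Lemma lex_obj_filtered_inr (C1 C2 : Type) (W1 : objective C1) (W2 : objective C2) w v :
  filtered (@proj2c C1 C2) w v -> lex_obj W1 W2 w -> W2 v.
Proof.
  intros fv [[_ [v' [fv' W2v']]] | [[N fin] _]].
  - now rewrite (filtered_unique fv fv').
  - destruct (filtered_infinite fv N) as [k [le_k k2]].
    exfalso. exact (fin k le_k (proj1 (proj2c_is2 _) k2)).
Qed.

Lemma descending_chain_stabilizes (V : Type) (le : V -> V -> Prop) :
  is_partial_order le -> well_founded (strict le) ->
  forall s : nat -> V, (forall n, le (s (S n)) (s n)) -> exists M, forall m, M <= m -> s m = s M.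
Proof.
  intros [refl [_ trans]] wf s.
  remember (s 0) as x eqn:s0. revert s s0.
  induction x as [x IH] using (well_founded_ind wf). intros s s0 desc.
  assert (below : forall n, le (s n) x) by (induction n; [subst; apply refl | eauto]).
  destruct (classic (forall n, s n = x)) as [const | [n sn_ne] % not_all_ex_not].
  - exists 0. intros m _. now rewrite const, s0.
  - destruct (IH (s n) (conj (below n) sn_ne) (fun k => s (n + k))) as [M stable].
    + now rewrite Nat.add_0_r.
    + intro k. rewrite Nat.add_succ_r. apply desc.
    + exists (n + M). intros m le_m. specialize (stable (m - n) ltac:(lia)).
      now replace (n + (m - n)) with m in stable by lia.
Qed.

Section LexProduct.

Variables (C1 C2 V1 V2 : Type) (E1 : edges V1 C1) (le1 : V1 -> V1 -> Prop)
  (E2 : edges V2 C2) (le2 : V2 -> V2 -> Prop).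
Hypothesis le2_order : is_partial_order le2.

Notation E := (lex_edges E1 E2 le2).

Lemma lex_le_snd x y : lex_le le1 le2 x y -> le2 (snd x) (snd y).
Proof. destruct le2_order as [refl _]. intros [[h _] | [-> _]]; auto. Qed.

Lemma lex_edge_inl_snd x c y : E x (inl c) y -> le2 (snd y) (snd x).
Proof. destruct le2_order as [refl _]. intros [[h _] | [-> _]]; auto. Qed.

Lemma lex_monotone : monotone E1 le1 -> monotone E2 le2 -> monotone E (lex_le le1 le2).
Proof.
  intros mono1 mono2 u v [c | c] v' u' vu e uv'; simpl in e |- *;
    [| exact (mono2 _ _ _ _ _ (lex_le_snd vu) e (lex_le_snd uv'))].
  destruct le2_order as [refl [antisym trans]].
  pose proof (lex_le_snd vu) as vu2. pose proof (lex_le_snd uv') as uv2.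
  pose proof (lex_edge_inl_snd (y := v') (c := c) e) as vv2.
  (* snd u' <= snd v' <= snd v <= snd u: unless it is strict, all four coincide. *)
  destruct (classic (snd u' = snd u)) as [same | ne]; [right | left].
  - assert (v_u : snd v = snd u) by (apply antisym; eauto; rewrite <- same; eauto).
    assert (v'_u : snd v' = snd u) by (apply antisym; eauto; rewrite <- same; eauto).
    split; [congruence |].
    destruct e as [[_ ne] | [_ e1]]; [congruence |].
    destruct vu as [[_ ne] | [_ vu1]]; [congruence |].
    destruct uv' as [[_ ne] | [_ uv1]]; [congruence |].
    exact (mono1 _ _ _ _ _ vu1 e1 uv1).
  - split; [eauto | exact ne].
Qed.

Lemma lex_is_graph : is_graph E2 -> is_graph E.
Proof.
  intros graph2 [x1 x2]. destruct (graph2 x2) as [c [y e]]. exists (inr c), (x1, y). exact e.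
Qed.

Section Satisfaction.

Variables (W1 : objective C1) (W2 : objective C2) (vs : nat -> V1 * V2) (cs : word (C1 + C2)).
Hypothesis path : forall k, E (vs k) (cs k) (vs (S k)).

Lemma lex_inl_run_snd i d :
  (forall k, i <= k < i + d -> ~ is2 (cs k)) -> le2 (snd (vs (i + d))) (snd (vs i)).
Proof.
  destruct le2_order as [refl [_ trans]]. intro run.
  induction d as [| d IH]; [rewrite Nat.add_0_r; apply refl |].
  specialize (path (i + d)). rewrite Nat.add_succ_r.
  destruct (cs (i + d)) as [c | c] eqn:E_c.
  - apply trans with (snd (vs (i + d))); [exact (lex_edge_inl_snd path) |].
    apply IH. intros k k_range. apply run. lia.
  - exfalso. apply (run (i + d)); [lia | now rewrite E_c].
Qed.

Lemma lex_path_filtered_inr v :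
  monotone E2 le2 -> satisfies E2 W2 -> filtered (@proj2c C1 C2) cs v -> W2 v.
Proof.
  intros mono2 sat2 fv. destruct fv as [f [f_incr [f_def f_onto]]].
  apply sat2 with (vs := fun n => snd (vs (f n))). intro n.
  assert (e : E2 (snd (vs (f n))) (v n) (snd (vs (S (f n))))).
  { specialize (f_def n). specialize (path (f n)).
    destruct (cs (f n)); [discriminate | injection f_def as ->; exact path]. }
  assert (run : le2 (snd (vs (S (f n) + (f (S n) - S (f n))))) (snd (vs (S (f n))))).
  { apply lex_inl_run_snd. intros k k_range k2.
    destruct (f_onto k) as [m <-]; [now apply proj2c_is2 |].
    assert (n < m) by (apply (increasing_lt_iff f_incr); lia).
    assert (m < S n) by (apply (increasing_lt_iff f_incr); lia). lia. }
  replace (S (f n) + (f (S n) - S (f n))) with (f (S n)) in run by (specialize (f_incr n); lia).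
  exact (mono2 _ _ _ _ _ (proj1 le2_order _) e run).
Qed.

Lemma lex_path_filtered_inl v :
  well_founded (strict le2) -> prefix_independent W1 -> satisfies E1 W1 ->
  finite2 cs -> filtered (@proj1c C1 C2) cs v -> W1 v.
Proof.
  intros wf2 pi1 sat1 [N no2] fv.
  destruct (descending_chain_stabilizes le2_order wf2 (s := fun n => snd (vs (N + n))))
    as [M stable].
  { intro n. rewrite Nat.add_succ_r. specialize (path (N + n)).
    destruct (cs (N + n)) as [c | c] eqn:E_c.
    - exact (lex_edge_inl_snd path).
    - exfalso. apply (no2 (N + n)); [lia | now rewrite E_c]. }
  destruct (filtered_suffix (N := N + M) fv) as [j suffix].
  { intros k k_ge. apply proj1c_not_is2, no2. lia. }
  apply (prefix_independent_suffix (j := j) pi1).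
  apply sat1 with (vs := fun n => fst (vs (N + M + n))). intro n.
  specialize (suffix n). specialize (path (N + M + n)). rewrite Nat.add_succ_r.
  destruct (cs (N + M + n)); simpl in suffix; [injection suffix as -> | discriminate].
  destruct path as [[_ ne] | [_ e1]]; [| exact e1].
  exfalso. apply ne.
  replace (S (N + M + n)) with (N + (M + S n)) by lia.
  replace (N + M + n) with (N + (M + n)) by lia.
  rewrite (stable (M + S n)), (stable (M + n)) by lia. reflexivity.
Qed.

End Satisfaction.

Lemma lex_satisfies (W1 : objective C1) (W2 : objective C2) :
  well_founded (strict le2) -> monotone E2 le2 ->
  prefix_independent W1 -> satisfies E1 W1 -> satisfies E2 W2 ->
  satisfies E (lex_obj W1 W2).
Proof.
  intros wf2 mono2 pi1 sat1 sat2 vs cs path.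
  destruct (classic (infinite2 cs)) as [inf | not_inf]; [left | right].
  - destruct (filtered_exists (p := @proj2c C1 C2) (w := cs)) as [v fv].
    { intro N. destruct (inf N) as [k [le_k k2]]. exists k. split; [exact le_k |].
      now apply proj2c_is2. }
    split; [exact inf |]. exists v. split; [exact fv |].
    eapply lex_path_filtered_inr; eassumption.
  - assert (fin : finite2 cs).
    { apply not_all_ex_not in not_inf as [N no2]. exists N. intros k le_k k2. eauto. }
    destruct (filtered_exists (p := @proj1c C1 C2) (w := cs)) as [v fv].
    { intro N. destruct fin as [N' no2]. exists (N + N').
      split; [lia | apply proj1c_not_is2, no2; lia]. }
    split; [exact fin |]. exists v. split; [exact fv |].
    eapply lex_path_filtered_inl; eassumption.
Qed.

End LexProduct.

Definition embeds_pretrees (K D U : Type) (EU : edges U D) (W : objective D) : Prop :=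
  forall (T : Type) (ET : edges T D) (t0 : T),
    is_pretree ET t0 -> card_lt T K -> satisfies ET W ->
    exists phi : T -> U, is_morphism ET EU phi.

Section PretreeDecomposition.

Variables (C1 C2 T : Type) (ET : edges T (C1 + C2)) (t0 : T).
Hypothesis tree : is_pretree ET t0.

Definition inl_step (s t : T) : Prop := exists c, ET s (inl c) t.
Definition in_component (a t : T) : Prop := clos_refl_trans_n1 T inl_step a t.
Definition component_root (t : T) : Prop := t = t0 \/ exists s c, ET s (inr c) t.

Lemma component_root_no_inl_edge a s c : component_root a -> ~ ET s (inl c) a.
Proof.
  intros [-> | [s' [c' e']]] e.
  - exact (pretree_no_edge_to_root tree e).
  - destruct (pretree_parent_unique tree e e') as [_ ne]. discriminate.
Qed.

Lemma component_root_unique a a' t :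
  component_root a -> component_root a' -> in_component a t -> in_component a' t -> a = a'.
Proof.
  intros ra ra' a_t. revert a' ra'.
  induction a_t as [| s t [c e] _ IH]; intros a' ra' a'_t;
    inversion a'_t as [| s' ? [c' e'] a'_s'].
  - reflexivity.
  - exfalso. exact (component_root_no_inl_edge ra e').
  - exfalso. subst. exact (component_root_no_inl_edge ra' e).
  - subst. destruct (pretree_parent_unique tree e e') as [<- _]. exact (IH a' ra' a'_s').
Qed.

Lemma in_component_step a s c t : in_component a s -> ET s (inl c) t -> in_component a t.
Proof.
  intros a_s e. apply Relation_Operators.rtn1_trans with s; [exists c; exact e | exact a_s].
Qed.

Definition lift_inl (s : C1 * T) : (C1 + C2) * T := (inl (fst s), snd s).

Lemma in_component_path a t :
  in_component a t -> exists p, is_path ET a (map lift_inl p) t.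
Proof.
  induction 1 as [| s t [c e] _ [p path_p]]; [exists []; reflexivity |].
  exists (p ++ [(c, t)]). rewrite map_app. apply is_path_snoc. eauto.
Qed.

Definition component : Type := {a : T | component_root a}.

Definition quotient_edges : edges component C2 :=
  fun a c b => exists s, in_component (proj1_sig a) s /\ ET s (inr c) (proj1_sig b).

Definition quotient_root : component := exist _ t0 (or_introl eq_refl).

Lemma component_of_path p t :
  is_path ET t0 p t ->
  exists a : component, in_component (proj1_sig a) t /\
                        exists q, is_path quotient_edges quotient_root q a.
Proof.
  revert t. induction p as [| [[c | c] x] p IH] using rev_ind; intros t path_p.
  - simpl in path_p; subst t. exists quotient_root. split; [constructor | exists []; reflexivity].
  - apply is_path_app in path_p as [s [path_p [e ->]]].
    destruct (IH s path_p) as [a [a_s reach_a]]. exists a.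
    split; [exact (in_component_step a_s e) | exact reach_a].
  - apply is_path_app in path_p as [s [path_p [e <-]]].
    destruct (IH s path_p) as [a [a_s [q path_q]]].
    assert (rx : component_root x) by (right; eauto).
    exists (exist _ x rx). split; [constructor |].
    exists (q ++ [(c, exist _ x rx)]). apply is_path_snoc. exists a. split; [exact path_q |].
    exists s. split; assumption.
Qed.

Lemma component_of_vertex t : exists a : component, in_component (proj1_sig a) t.
Proof.
  destruct (tree t) as [p [path_p _]]. destruct (component_of_path path_p) as [a [a_t _]].
  eauto.
Qed.

Lemma quotient_pretree : is_pretree quotient_edges quotient_root.
Proof.
  apply pretree_intro.
  - intro b. destruct (tree (proj1_sig b)) as [p [path_p _]].
    destruct (component_of_path path_p) as [a [a_b reach_a]].
    replace b with a; [exact reach_a |].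
    apply proj1_sig_inj, (component_root_unique (proj2_sig a) (proj2_sig b) a_b).
    constructor.
  - intros x c [s [_ e]]. exact (pretree_no_edge_to_root tree e).
  - intros x c x' c' y [s [x_s e]] [s' [x'_s' e']].
    destruct (pretree_parent_unique tree e e') as [<- same_c]. injection same_c as ->.
    split; [| reflexivity].
    apply proj1_sig_inj, (component_root_unique (proj2_sig x) (proj2_sig x') x_s x'_s').
Qed.

Definition component_vertex (a : T) : Type := {t : T | in_component a t}.

Definition component_edges (a : T) : edges (component_vertex a) C1 :=
  fun x c y => ET (proj1_sig x) (inl c) (proj1_sig y).

Definition component_base (a : T) : component_vertex a := exist _ a (rtn1_refl _ _ a).

Arguments component_edges : clear implicits.
Arguments component_base : clear implicits.

Lemma component_pretree a : component_root a -> is_pretree (component_edges a) (component_base a).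
Proof.
  intro ra. apply pretree_intro.
  - intros [t a_t]. generalize a_t. induction a_t as [| s t [c e] a_s IH]; intro a_t.
    + exists []. apply proj1_sig_inj. reflexivity.
    + destruct (IH a_s) as [q path_q]. exists (q ++ [(c, exist _ t a_t)]).
      apply is_path_snoc. exists (exist _ s a_s). split; [exact path_q | exact e].
  - intros x c e. exact (component_root_no_inl_edge ra e).
  - intros x c x' c' y e e'. destruct (pretree_parent_unique tree e e') as [same same_c].
    injection same_c as ->. split; [apply proj1_sig_inj, same | reflexivity].
Qed.

Variables (W1 : objective C1) (W2 : objective C2).
Hypothesis sat : satisfies ET (lex_obj W1 W2).

Lemma component_satisfies a : satisfies (component_edges a) W1.
Proof.
  intros xs cs path. apply (lex_obj_inl (W2 := W2)).
  exact (sat (vs := fun n => proj1_sig (xs n)) (cs := fun n => inl (cs n)) path).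
Qed.

Lemma quotient_satisfies : satisfies quotient_edges W2.
Proof.
  intros xs cs path.
  (* Each quotient edge unfolds to a C1-run followed by one C2-edge of T; concatenating these
     blocks gives an infinite path of T whose C2-letters are exactly [cs]. *)
  assert (blocks : forall n, exists p,
    is_path ET (proj1_sig (xs n)) (map lift_inl p ++ [(inr (cs n), proj1_sig (xs (S n)))])
                                  (proj1_sig (xs (S n)))).
  { intro n. destruct (path n) as [s [xs_s e]]. destruct (in_component_path xs_s) as [p path_p].
    exists p. apply is_path_app. exists s. split; [exact path_p | simpl; auto]. }
  destruct (choice _ blocks) as [p paths].
  pose (b n := map lift_inl (p n) ++ [(inr (cs n), proj1_sig (xs (S n)))]).
  change (forall n, is_path ET (proj1_sig (xs n)) (b n) (proj1_sig (xs (S n)))) in paths.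
  assert (b_nonempty : forall n, 0 < length (b n))
    by (intro n; unfold b; rewrite length_app; simpl; lia).
  set (d := (inr (cs 0), t0) : (C1 + C2) * T).
  destruct (infinite_path_of_paths d b_nonempty paths) as [vs path_T].
  apply (lex_obj_filtered_inr (W1 := W1) (w := fun k => fst (flatten b d k)));
    [| exact (sat path_T)].
  apply (filtered_flatten b_nonempty (p := fun s => proj2c (fst s))).
  - intros n j j_lt. unfold b in *. rewrite length_app in j_lt. simpl in j_lt.
    rewrite app_nth1 by lia.
    destruct (proj1 (in_map_iff _ _ _) (nth_In (map lift_inl (p n)) d (n := j) ltac:(lia)))
      as [y [<- _]].
    reflexivity.
  - intro n. unfold b. rewrite length_app, Nat.add_1_r, Nat.pred_succ, nth_middle.
    reflexivity.
Qed.

Variable K : Type.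
Hypothesis small : card_lt T K.

Lemma component_morphism (V1 : Type) (E1 : edges V1 C1) a :
  embeds_pretrees K E1 W1 -> component_root a ->
  exists phi1 : T -> V1,
    forall s c t, in_component a s -> ET s (inl c) t -> E1 (phi1 s) c (phi1 t).
Proof.
  intros emb1 ra.
  destruct (emb1 _ _ _ (component_pretree ra) (card_lt_sig _ small)
                  (component_satisfies (a := a))) as [phi mor].
  exists (fun t => match excluded_middle_informative (in_component a t) with
                   | left a_t => phi (exist _ t a_t)
                   | right _ => phi (component_base a)
                   end).
  intros s c t a_s e.
  assert (a_t : in_component a t) by exact (in_component_step a_s e).
  destruct (excluded_middle_informative (in_component a s)) as [a_s' |]; [| contradiction].
  destruct (excluded_middle_informative (in_component a t)) as [a_t' |]; [| contradiction].
  exact (mor (exist _ s a_s') c (exist _ t a_t') e).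
Qed.

Lemma pretree_lex_morphism (V1 V2 : Type) (E1 : edges V1 C1) (E2 : edges V2 C2)
  (le2 : V2 -> V2 -> Prop) :
  embeds_pretrees K E1 W1 -> embeds_pretrees K E2 W2 ->
  exists phi : T -> V1 * V2, is_morphism ET (lex_edges E1 E2 le2) phi.
Proof.
  intros emb1 emb2.
  destruct (emb2 _ _ _ quotient_pretree (card_lt_sig _ small) quotient_satisfies) as [phi2 mor2].
  destruct (choice _ (fun a : component => component_morphism emb1 (proj2_sig a)))
    as [phi1 mor1].
  destruct (choice _ component_of_vertex) as [top top_spec].
  exists (fun t => (phi1 (top t) t, phi2 (top t))).
  intros s [c | c] t e; simpl.
  - assert (same : top t = top s).
    { apply proj1_sig_inj, (component_root_unique (proj2_sig _) (proj2_sig _) (top_spec t)).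
      exact (in_component_step (top_spec s) e). }
    right. rewrite same. split; [reflexivity | exact (mor1 _ _ _ _ (top_spec s) e)].
  - assert (top_t : proj1_sig (top t) = t).
    { assert (rt : component_root t) by (right; eauto).
      apply (component_root_unique (proj2_sig _) rt (top_spec t)). constructor. }
    apply mor2. exists s. split; [apply top_spec | rewrite top_t; exact e].
Qed.

End PretreeDecomposition.

Lemma lex_embeds_pretrees (K C1 C2 V1 V2 : Type) (W1 : objective C1) (W2 : objective C2)
  (E1 : edges V1 C1) (E2 : edges V2 C2) (le2 : V2 -> V2 -> Prop) :
  embeds_pretrees K E1 W1 -> embeds_pretrees K E2 W2 ->
  embeds_pretrees K (lex_edges E1 E2 le2) (lex_obj W1 W2).
Proof.
  intros emb1 emb2 T ET t0 tree small sat.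
  exact (pretree_lex_morphism tree sat small le2 emb1 emb2).
Qed.

Theorem theorem6p3 (C1 C2 K V1 V2 : Type)
  (W1 : objective C1) (W2 : objective C2)
  (E1 : edges V1 C1) (le1 : V1 -> V1 -> Prop)
  (E2 : edges V2 C2) (le2 : V2 -> V2 -> Prop) :
  prefix_independent W1 -> prefix_independent W2 ->
  well_monotone E1 le1 -> well_monotone E2 le2 ->
  universal K E1 W1 -> universal K E2 W2 ->
  monotone (lex_edges E1 E2 le2) (lex_le le1 le2) /\
  universal K (lex_edges E1 E2 le2) (lex_obj W1 W2).
Proof.
  intros pi1 _ [_ [mono1 _]] [order2 [mono2 wf2]] [_ [sat1 emb1]] [graph2 [sat2 emb2]].
  split; [| split; [| split]].
  - exact (lex_monotone order2 mono1 mono2).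
  - exact (lex_is_graph E1 le2 graph2).
  - exact (lex_satisfies order2 wf2 mono2 pi1 sat1 sat2).
  - exact (lex_embeds_pretrees le2 emb1 emb2).
Qed.
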